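(* For any signature $\Sigma$, any $\Sigma$-forest-like alphabets $A_1,A_2$ and any reduced $\Sigma$-forest $f$, $$\theta_{A_1,A_2}\big(r_{A_1\mathbin{+\!\!+}A_2}(E_f)\big)=(r_{A_1}\otimes r_{A_2})(\Delta E_f).$$
   Context: $\mathbb K$ is a field of characteristic zero; $[P]$ is $1$ if $P$ holds, $0$ otherwise. A signature is a set $\Sigma$ with arity map $|\cdot|:\Sigma\to\mathbb N$, $\Sigma(n)$ the elements of arity $n$. A $\Sigma$-term is the leaf $\bot$ or $s(t_1,\dots,t_n)$ with $s\in\Sigma(n)$, $t_i$ terms; degree = number of internal nodes, arity $|t|$ = number of leaves. $T(\Sigma)$ is the free operad: $t[t_1,\dots,t_{|t|}]$ grafts $t_i$ on the $i$-th leaf of $t$. A $\Sigma$-forest is a finite word of terms; reduced if no term is $\bot$; $\mathrm{rd}$ deletes terms equal to $\bot$. Internal nodes of a forest $f$ are identified with $1,\dots,\deg f$ by preorder; $d_f(i)$ is the decoration of $i$; $i\to^f_j i'$ means $i'$ is the $j$-th child of $i$; roots are the roots of the terms. $\mathbf N(T(\Sigma))$: basis $E_f$ ($f$ reduced forest), product $E_{f_1}E_{f_2}=E_{f_1f_2}$, coproduct the algebra morphism with $\Delta E_t=\sum E_{\mathrm{rd}(t')}\otimes E_{\mathrm{rd}(t_1\cdots t_{|t'|})}$ over all $t',t_1,\dots$ with $t=t'[t_1,\dots,t_{|t'|}]$. A $\Sigma$-forest-like alphabet is a set $A$ with arbitrary: subset $R^A$, subsets $D^A_s$ ($s\in\Sigma$),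 binary relations $\to^A_j$ ($j\ge1$). $\mathbb K\langle A\rangle$: noncommutative polynomials over $A$ with possibly infinite support but bounded degree. A word $w\in A^*$ is $A$-compatible with $f$ if it has length $\deg f$, $w(i)\in R^A$ for each root $i$, $w(i)\in D^A_{d_f(i)}$ for each node $i$, and $i\to^f_j i'$ implies $w(i)\to^A_j w(i')$. $r_A(E_f)=\sum_{w\in A^*}[w\ A\text{-compatible with }f]\,w$, extended linearly. The disjoint sum $A_1\mathbin{+\!\!+}A_2$ is $A_1\sqcup A_2$ with $R=R^{A_1}\sqcup R^{A_2}$, $D_s=D^{A_1}_s\sqcup D^{A_2}_s$, and $a\to_j a'$ iff ($a,a'\in A_1$, $a\to^{A_1}_j a'$) or ($a,a'\in A_2$, $a\to^{A_2}_j a'$) or ($a\in A_1$, $a'\in A_2$, $a'\in R^{A_2}$). $\theta_{A_1,A_2}:\mathbb K\langle A_1\sqcup A_2\rangle\to\mathbb K\langle A_1\rangle\otimes\mathbb K\langle A_2\rangle$ is the linear map $w\mapsto w_{|A_1}\otimes w_{|A_2}$ ($w_{|B}$ the subword of letters in $B$). *)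

From mathcomp Require Import all_boot all_algebra.
Set Implicit Arguments. Unset Strict Implicit. Unset Printing Implicit Defensive.
Import GRing.Theory.
Local Open Scope ring_scope.

(* Terms: the leaf ⊥ ([Leaf]) or s(t_1,...,t_n) ([Node s [:: t_1; ...; t_n]]);
   well-formedness (n = |s|) is the predicate [wf_term ar]. *)
Inductive term (Sig : Type) : Type :=
| Leaf : term Sig
| Node : Sig -> seq (term Sig) -> term Sig.
Arguments Leaf {Sig}.

Section Terms.
Variable Sig : Type.
Variable ar : Sig -> nat.

Fixpoint wf_term (t : term Sig) : bool :=
  match t with
  | Leaf => true
  | Node s ch =>
    (size ch == ar s) &&
    (fix go (l : seq (term Sig)) : bool :=
       match l with [::] => true | c :: l' => wf_term c && go l' end) ch
  end.

Definition is_node (t : term Sig) : bool := if t is Node _ _ then true else false.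

Definition forest := seq (term Sig).

Definition reduced_forest (f : forest) : bool := all wf_term f && all is_node f.

Definition rd (f : forest) : forest := filter is_node f.

Fixpoint tarity (t : term Sig) : nat :=
  match t with
  | Leaf => 1
  | Node _ ch =>
    (fix go (l : seq (term Sig)) : nat :=
       match l with [::] => 0 | c :: l' => tarity c + go l' end) ch
  end.

(* Grafting t[t_1,...,t_|t|]: graft the i-th term of [ts] on the i-th leaf
   (returns the graft together with the unused terms). *)
Fixpoint graft_aux (t : term Sig) (ts : seq (term Sig)) : term Sig * seq (term Sig) :=
  match t with
  | Leaf => if ts is u :: ts' then (u, ts') else (Leaf, [::])
  | Node s ch =>
    let fix go (l : seq (term Sig)) (ts : seq (term Sig)) :=
      match l with
      | [::] => ([::], ts)
      | c :: l' =>
        let p := graft_aux c ts in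
        let q := go l' p.2 in (p.1 :: q.1, q.2)
      end in
    let q := go ch ts in (Node s q.1, q.2)
  end.
Definition graft (t : term Sig) (ts : seq (term Sig)) : term Sig := (graft_aux t ts).1.

(* All decompositions t = t'[t_1,...,t_|t'|], as the list of pairs
   (t', [:: t_1; ...; t_|t'|]); each decomposition listed exactly once:
   either t' = ⊥ (and t_1 = t), or t = s(c_1..c_n), t' = s(c'_1..c'_n) with
   each c_i = c'_i[...] a decomposition of c_i. *)
Fixpoint decomps (t : term Sig) : seq (term Sig * seq (term Sig)) :=
  match t with
  | Leaf => [:: (Leaf, [:: Leaf])]
  | Node s ch =>
    let fix go (l : seq (term Sig)) : seq (seq (term Sig) * seq (term Sig)) :=
      match l with
      | [::] => [:: ([::], [::])]
      | c :: l' =>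
        [seq (p.1 :: q.1, p.2 ++ q.2) | p <- decomps c, q <- go l']
      end in
    (Leaf, [:: t]) :: [seq (Node s q.1, q.2) | q <- go ch]
  end.

(* Coproduct of N(T(Sig)) on a basis element E_f, as a list (with
   multiplicity) of pairs (g, h) standing for E_g ⊗ E_h.  Δ is the algebra
   morphism with Δ E_t = Σ E_rd(t') ⊗ E_rd(t_1...t_|t'|); since
   E_{f1} E_{f2} = E_{f1 f2} and the product of E_g⊗E_h and E_g'⊗E_h' is
   E_{gg'} ⊗ E_{hh'}, Δ E_{t f'} = Δ E_t · Δ E_{f'}. *)
Fixpoint coprod (f : forest) : seq (forest * forest) :=
  match f with
  | [::] => [:: ([::], [::])]
  | t :: f' =>
    [seq (rd [:: p.1] ++ q.1, rd p.2 ++ q.2) | p <- decomps t, q <- coprod f']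
  end.

(* [tinfo t] = (decorations of the internal nodes of t in preorder,
               edges (i, j, i') meaning "i' is the j-th child of i"),
   internal nodes numbered 0,1,... in preorder (0-based). *)
Fixpoint tinfo (t : term Sig) : seq Sig * seq (nat * nat * nat) :=
  match t with
  | Leaf => ([::], [::])
  | Node s ch =>
    let fix go (l : seq (term Sig)) (k off : nat)
        : seq Sig * seq (nat * nat * nat) :=
      match l with
      | [::] => ([::], [::])
      | c :: l' =>
        let p := tinfo c in
        let q := go l' k.+1 (off + size p.1) in
        (p.1 ++ q.1,
         (if is_node c then [:: (0%N, k, off)] else [::])
           ++ [seq (e.1.1 + off, e.1.2, e.2 + off)%N | e <- p.2] ++ q.2)
      end in
    let q := go ch 1 1 in (s :: q.1, q.2)
  end.

(* [finfo f] = (decorations in preorder, indices of the roots, edges). *)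
Fixpoint finfo_aux (f : forest) (off : nat)
  : seq Sig * seq nat * seq (nat * nat * nat) :=
  match f with
  | [::] => ([::], [::], [::])
  | t :: f' =>
    let p := tinfo t in
    let q := finfo_aux f' (off + size p.1) in
    (p.1 ++ q.1.1,
     (if is_node t then [:: off] else [::]) ++ q.1.2,
     [seq (e.1.1 + off, e.1.2, e.2 + off)%N | e <- p.2] ++ q.2)
  end.
Definition finfo (f : forest) := finfo_aux f 0.

Definition fdeg (f : forest) : nat := size (finfo f).1.1.

End Terms.

(* A Sig-forest-like alphabet on the set (type) A: subsets R^A, D^A_s and
   binary relations ->^A_j (j >= 1), given by their characteristic functions. *)
Record fla (Sig A : Type) := FLA {
  rootP : pred A;
  decP  : Sig -> pred A;
  arrP  : nat -> rel A }.

Section Alphabets.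
Variable Sig : Type.

Definition compatible (A : Type) (B : fla Sig A) (f : forest Sig) (w : seq A) : bool :=
  let: (ds, roots, es) := finfo f in
  [&& size w == size ds,
      all (fun i => if onth w i is Some a then rootP B a else false) roots,
      all (fun p => decP B p.1 p.2) (zip ds w) &
      all (fun e => match onth w e.1.1, onth w e.2 with
                    | Some a, Some a' => arrP B e.1.2 a a'
                    | _, _ => false end) es].

(* Elements of K<A> are represented by their coefficient functions
   (seq A -> K); r_A(E_f) = Σ_w [w A-compatible with f] w. *)
Definition r_alpha (K : fieldType) (A : Type) (B : fla Sig A) (f : forest Sig)
  : seq A -> K :=
  fun w => (compatible B f w)%:R.

Definition sum_fla (A1 A2 : Type) (B1 : fla Sig A1) (B2 : fla Sig A2)
  : fla Sig (A1 + A2) :=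
  FLA (fun x => match x with inl a => rootP B1 a | inr b => rootP B2 b end)
      (fun s x => match x with inl a => decP B1 s a | inr b => decP B2 s b end)
      (fun j x y => match x, y with
                    | inl a, inl a' => arrP B1 j a a'
                    | inr b, inr b' => arrP B2 j b b'
                    | inl _, inr b' => rootP B2 b'
                    | inr _, inl _ => false end).

End Alphabets.

Section Theta.
Variables A1 A2 : Type.

Definition restr1 (w : seq (A1 + A2)) : seq A1 :=
  pmap (fun x => if x is inl a then Some a else None) w.
Definition restr2 (w : seq (A1 + A2)) : seq A2 :=
  pmap (fun x => if x is inr b then Some b else None) w.

(* [shuffle u v] lists (without repetition) all words w over A1 ⊔ A2 with
   w_{|A1} = u and w_{|A2} = v. *)
Fixpoint shuffle (u : seq A1) (v : seq A2) : seq (seq (A1 + A2)) :=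
  match u with
  | [::] => [:: map inr v]
  | a :: u' =>
    let fix sh2 (v : seq A2) :=
      match v with
      | [::] => [:: map inl u]
      | b :: v' => [seq inl a :: w | w <- shuffle u' v] ++ [seq inr b :: w | w <- sh2 v']
      end in sh2 v
  end.

(* Elements of K<A1> ⊗ K<A2> are represented by coefficient functions
   on pairs of words (this contains the algebraic tensor product and is where
   θ of an infinite-support polynomial lives).
   θ(P)(u, v) = Σ_{w : w_{|A1} = u, w_{|A2} = v} P(w). *)
Definition theta (K : fieldType) (P : seq (A1 + A2) -> K) : seq A1 * seq A2 -> K :=
  fun uv => \sum_(w <- shuffle uv.1 uv.2) P w.

End Theta.

(* (r_{A1} ⊗ r_{A2}) applied to Σ_{(g,h) in l} E_g ⊗ E_h *)
Definition tensor_r (K : fieldType) (Sig A1 A2 : Type) (B1 : fla Sig A1) (B2 : fla Sig A2)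
  (l : seq (forest Sig * forest Sig)) : seq A1 * seq A2 -> K :=
  fun uv => \sum_(gh <- l) r_alpha K B1 gh.1 uv.1 * r_alpha K B2 gh.2 uv.2.

(* Both sides count the ways of reading a pair of words (u, v) along the forest in preorder.
   A pending node is read either by a letter of A1, after which its children stay pending under
   the arrows from that letter, or by a letter of A2 in R^{A2}, after which its whole subtree
   must be read in A2, since the disjoint sum has no arrow from A2 back to A1.  On the theta side
   the interleaving is summed over the shuffles of u and v; on the coproduct side the A1-part of
   each tree t is the cut t' of a decomposition t = t'[t_1, ...], whose t_i are the A2-parts.
   Both sums obey the same recursion on the list of pending terms, hence agree by induction on
   |u| + |v|. *)

From mathcomp Require Import all_boot all_algebra zify.
From Pilot Require Import Defs. (* after MathComp, so that [decP] is the field of [fla] *)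
From Stdlib Require Import FunctionalExtensionality.
Set Implicit Arguments. Unset Strict Implicit. Unset Printing Implicit Defensive.
Import GRing.Theory.

Lemma onth_drop (T : Type) (s : seq T) n i : onth (drop n s) i = onth s (n + i).
Proof. by elim: n s => [|n IH] [|x s] //=; rewrite onth0n. Qed.

Lemma onth_take (T : Type) (s : seq T) n i : i < n -> onth (take n s) i = onth s i.
Proof. by elim: n s i => [|n IH] [|x s] [|i] //= /IH. Qed.

Section Terms.
Variable Sig : Type.

Lemma term_nested_ind (P : term Sig -> Prop) : P Leaf ->
  (forall s ch, foldr (fun c acc => P c /\ acc) True ch -> P (Node s ch)) ->
  forall t, P t.
Proof.
move=> PLeaf PNode; fix IH 1 => -[|s ch]; first exact: PLeaf.
by apply: PNode; elim: ch => [|c ch IHch] //=; split.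
Qed.

Definition shift_edge (off : nat) (e : nat * nat * nat) := (e.1.1 + off, e.1.2, e.2 + off)%N.

(* The local fixpoint of [tinfo] running over the children, made global. *)
Fixpoint tinfo_children (ch : seq (term Sig)) (k off : nat)
  : seq Sig * seq (nat * nat * nat) :=
  match ch with
  | [::] => ([::], [::])
  | c :: ch' =>
    let p := tinfo c in
    let q := tinfo_children ch' k.+1 (off + size p.1) in
    (p.1 ++ q.1,
     (if is_node c then [:: (0%N, k, off)] else [::])
       ++ [seq shift_edge off e | e <- p.2] ++ q.2)
  end.

Lemma tinfo_Node s ch :
  tinfo (Node s ch) = (s :: (tinfo_children ch 1 1).1, (tinfo_children ch 1 1).2).
Proof. by []. Qed.

Definition tdeg (t : term Sig) := size (tinfo t).1.

Lemma tinfo_children_decs ch k off :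
  (tinfo_children ch k off).1 = flatten [seq (tinfo c).1 | c <- ch].
Proof. by elim: ch k off => //= c ch IH k off; rewrite IH. Qed.

Lemma tdeg_Node s ch : tdeg (Node s ch) = (sumn (map tdeg ch)).+1.
Proof. by rewrite /tdeg tinfo_Node /= tinfo_children_decs size_flatten /shape -map_comp. Qed.

Lemma tdeg_gt0 t : is_node t -> 0 < tdeg t.
Proof. by case: t => // s ch; rewrite tdeg_Node. Qed.

Definition edge_below n (e : nat * nat * nat) := (e.1.1 < n) && (e.2 < n).

Lemma tinfo_children_edges_below ch k off : 0 < off ->
  foldr (fun c acc => all (edge_below (tdeg c)) (tinfo c).2 /\ acc) True ch ->
  all (edge_below (off + sumn (map tdeg ch))) (tinfo_children ch k off).2.
Proof.
elim: ch k off => //= c ch IH k off off_gt0 [Hc Hch].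
rewrite !all_cat; apply/and3P; split.
- by case: ifP => // /tdeg_gt0 ? /=; rewrite /edge_below /=; apply/andP; split; lia.
- rewrite all_map; apply/allP => e /(allP Hc) /andP[? ?].
  by rewrite /edge_below /=; apply/andP; split; lia.
- by rewrite addnA; apply: IH; rewrite ?ltn_addr.
Qed.

Lemma tinfo_edges_below t : all (edge_below (tdeg t)) (tinfo t).2.
Proof.
elim/term_nested_ind: t => // s ch IH.
by rewrite tinfo_Node tdeg_Node -add1n; apply: tinfo_children_edges_below.
Qed.

Fixpoint tag_children (X : Type) (F : nat -> X) (k : nat) (ch : seq (term Sig))
  : seq (X * term Sig) :=
  if ch is c :: ch' then (F k, c) :: tag_children F k.+1 ch' else [::].

Definition pdeg (X : Type) (L : seq (X * term Sig)) := sumn [seq tdeg e.2 | e <- L].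

Lemma pdeg_cat X (L1 L2 : seq (X * term Sig)) : pdeg (L1 ++ L2) = pdeg L1 + pdeg L2.
Proof. by rewrite /pdeg map_cat sumn_cat. Qed.

Lemma pdeg_tag_children X (F : nat -> X) k ch : pdeg (tag_children F k ch) = sumn (map tdeg ch).
Proof. by elim: ch k => //= c ch IH k; rewrite /pdeg /= -/(pdeg _) IH. Qed.

End Terms.
Arguments tdeg {Sig} t.

Section Compat.
Variables (Sig A : Type) (B : fla Sig A).

Definition children (a : A) (ch : seq (term Sig)) := tag_children (fun k => arrP B k a) 1 ch.

(* [compat w L] reads [w] in preorder along the terms of [L]; the root of each term is
   constrained by the predicate it is paired with, which is R^A for a root of the forest and
   [arrP B k a] for the k-th child of a node read as [a]. *)
Fixpoint compat (w : seq A) (L : seq (pred A * term Sig)) {struct w} : bool :=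
  let fix skip (L : seq (pred A * term Sig)) :=
    match L with
    | [::] => nilp w
    | (P, Leaf) :: L' => skip L'
    | (P, Node s ch) :: L' =>
      if w is a :: w' then
        [&& P a, decP B s a & compat w' (children a ch ++ L')]
      else false
    end in skip L.

Lemma compat_nil w : compat w [::] = nilp w. Proof. by case: w. Qed.
Lemma compat_Leaf w P L : compat w ((P, Leaf) :: L) = compat w L. Proof. by case: w. Qed.
Lemma compat_Node0 P s ch L : compat [::] ((P, Node s ch) :: L) = false. Proof. by []. Qed.
Lemma compat_Node a w P s ch L :
  compat (a :: w) ((P, Node s ch) :: L) = [&& P a, decP B s a & compat w (children a ch ++ L)].
Proof. by []. Qed.

Lemma compat_cat w L1 L2 :
  compat w (L1 ++ L2) = compat (take (pdeg L1) w) L1 && compat (drop (pdeg L1) w) L2.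
Proof.
elim: w L1 => [|a w IHw] L1.
  by elim: L1 => [|[P [|s ch]] L1 IHL] //=; rewrite compat_Leaf.
elim: L1 => [|[P [|s ch]] L1 IHL]; first by rewrite take0 drop0 compat_nil.
  by rewrite cat_cons !compat_Leaf IHL.
have -> : pdeg ((P, Node s ch) :: L1) = (pdeg (children a ch ++ L1)).+1.
  by rewrite pdeg_cat pdeg_tag_children /pdeg /= tdeg_Node.
by rewrite cat_cons /= catA IHw -!andbA.
Qed.

Lemma compat_filter w L : compat w [seq e <- L | is_node e.2] = compat w L.
Proof.
elim: w L => [|a w IHw] L.
  by elim: L => [|[P [|s ch]] L IHL] //=; rewrite compat_Leaf.
elim: L => [|[P [|s ch]] L IHL] //=.
by rewrite -IHw filter_cat filter_id -filter_cat IHw.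
Qed.

Definition at_ok (P : pred A) (W : seq A) i := if onth W i is Some a then P a else false.

Definition edge_ok (W : seq A) (e : nat * nat * nat) :=
  match onth W e.1.1, onth W e.2 with
  | Some a, Some a' => arrP B e.1.2 a a'
  | _, _ => false end.

Definition decs_ok (ds : seq Sig) (W : seq A) := all (fun p => decP B p.1 p.2) (zip ds W).

(* [compatible] for a single term, with [P] in place of R^A. *)
Definition tcompat (P : pred A) (t : term Sig) (W : seq A) :=
  [&& size W == tdeg t, (if is_node t then at_ok P W 0 else true),
      decs_ok (tinfo t).1 W & all (edge_ok W) (tinfo t).2].

Lemma edge_ok_shift W off e : edge_ok W (shift_edge off e) = edge_ok (drop off W) e.
Proof. by rewrite /edge_ok /= !onth_drop ![(off + _)%N]addnC. Qed.

Lemma edge_ok_take W n e : edge_below n e -> edge_ok (take n W) e = edge_ok W e.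
Proof. by case/andP=> ? ?; rewrite /edge_ok !onth_take. Qed.

Lemma tcompat_segment P t off W n ds (rest : bool) :
  [&& size (drop off W) == tdeg t + n, decs_ok ((tinfo t).1 ++ ds) (drop off W),
      (if is_node t then at_ok P W off else true),
      all (edge_ok W) [seq shift_edge off e | e <- (tinfo t).2] & rest]
  = [&& tcompat P t (take (tdeg t) (drop off W)),
        size (drop (off + tdeg t) W) == n, decs_ok ds (drop (off + tdeg t) W) & rest].
Proof.
rewrite [(off + _)%N]addnC -drop_drop; set X := drop off W.
have [short|long] := ltnP (size X) (tdeg t).
  rewrite /tcompat size_take_min (minn_idPr (ltnW short)) (ltn_eqF short).
  by rewrite (ltn_eqF (leq_trans short (leq_addr _ _))).
rewrite /tcompat size_take_min (minn_idPl long) eqxx /=.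
rewrite -{1 2}(cat_take_drop (tdeg t) X) size_cat size_take_min (minn_idPl long) eqn_add2l.
rewrite /decs_ok zip_cat ?size_take_min ?(minn_idPl long) // all_cat all_map.
have -> : all (fun e => edge_ok W (shift_edge off e)) (tinfo t).2 =
          all (edge_ok (take (tdeg t) X)) (tinfo t).2.
  apply: eq_in_all => e /(allP (tinfo_edges_below t)) e_below.
  by rewrite edge_ok_shift edge_ok_take.
have -> : (if is_node t then at_ok P W off else true) =
          (if is_node t then at_ok P (take (tdeg t) X) 0 else true).
  by case: ifP => // /tdeg_gt0 t_gt0; rewrite /at_ok onth_take // onth_drop addn0.
by rewrite -!andbA; do !bool_congr.
Qed.

Lemma compat_cons P t L W :
  compat W ((P, t) :: L) = compat (take (tdeg t) W) [:: (P, t)] && compat (drop (tdeg t) W) L.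
Proof. by rewrite -cat1s compat_cat /pdeg /= addn0. Qed.

Lemma tinfo_children_compat (a : A) (ch : seq (term Sig)) k off W :
  foldr (fun c acc => (forall P W, tcompat P c W = compat W [:: (P, c)]) /\ acc) True ch ->
  onth W 0 = Some a -> 0 < off ->
  [&& size (drop off W) == sumn (map tdeg ch),
      decs_ok (tinfo_children ch k off).1 (drop off W)
    & all (edge_ok W) (tinfo_children ch k off).2]
  = compat (drop off W) (tag_children (fun k => arrP B k a) k ch).
Proof.
elim: ch k off => [k off _ _ _|c ch IH k off [IHc IHch] Wa off_gt0].
  by rewrite /= andbT compat_nil /decs_ok; case: (drop _ _).
have head_edge : all (edge_ok W) (if is_node c then [:: (0%N, k, off)] else [::])
               = (if is_node c then at_ok (arrP B k a) W off else true).
  by case: ifP => //= _; rewrite andbT /edge_ok /at_ok Wa.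
rewrite /= -/(tdeg c) !all_cat head_edge tcompat_segment IHc IH ?ltn_addr //.
by rewrite [RHS]compat_cons drop_drop addnC.
Qed.

Lemma tcompat_compat t P W : tcompat P t W = compat W [:: (P, t)].
Proof.
elim/term_nested_ind: t P W => [|s ch IH] P W.
  by rewrite /tcompat /decs_ok compat_Leaf compat_nil; case: W.
case: W => [|a W]; first by rewrite /tcompat tdeg_Node.
rewrite compat_Node cats0.
have := @tinfo_children_compat a ch 1 1 (a :: W) IH erefl erefl; rewrite /= drop0 => <-.
rewrite /tcompat tdeg_Node eqSS tinfo_Node /= -/(size W).
by rewrite -!andbA; do !bool_congr.
Qed.

Lemma finfo_aux_compat f off W :
  [&& size (drop off W) == size (finfo_aux f off).1.1,
      decs_ok (finfo_aux f off).1.1 (drop off W),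
      all (at_ok (rootP B) W) (finfo_aux f off).1.2
    & all (edge_ok W) (finfo_aux f off).2]
  = compat (drop off W) [seq (rootP B, t) | t <- f].
Proof.
elim: f off => [|t f IH] off.
  by rewrite /= !andbT compat_nil /decs_ok; case: (drop _ _).
have head_root : all (at_ok (rootP B) W) (if is_node t then [:: off] else [::])
               = (if is_node t then at_ok (rootP B) W off else true).
  by case: ifP => //= _; rewrite andbT.
rewrite /= -/(tdeg t) size_cat !all_cat head_root andbACA -andbA tcompat_segment.
by rewrite tcompat_compat IH [RHS]compat_cons drop_drop addnC.
Qed.

Lemma compatible_compat f w : compatible B f w = compat w [seq (rootP B, t) | t <- f].
Proof.
have := finfo_aux_compat f 0 w; rewrite drop0 => <-; rewrite /compatible /finfo.
by case: (finfo_aux f 0) => [[ds rs] es] /=; congr (_ && _); apply: andbCA.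
Qed.
End Compat.

Local Open Scope ring_scope.

Lemma big_shuffle (A1 A2 : Type) (V : nmodType) (F : seq (A1 + A2) -> V) u v :
  \sum_(w <- shuffle u v) F w =
    (if u is [::] then (if v is [::] then F [::] else 0) else 0)
  + (if u is a :: u' then \sum_(w <- shuffle u' v) F (inl a :: w) else 0)
  + (if v is b :: v' then \sum_(w <- shuffle u v') F (inr b :: w) else 0).
Proof.
case: u => [|a u]; case: v => [|b v].
- by rewrite /= big_seq1 !addr0.
- by rewrite /= !big_seq1 !add0r.
- by case: u => [|a' u]; rewrite /= !big_seq1 add0r addr0.
- by rewrite /= big_cat !big_map add0r.
Qed.

Lemma map_tag_children (Sig X Y : Type) (f : X -> Y) (F : nat -> X) k (ch : seq (term Sig)) :
  [seq (f e.1, e.2) | e <- tag_children F k ch] = tag_children (f \o F) k ch.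
Proof. by elim: ch k => //= c ch IH k; rewrite IH. Qed.

Lemma natr_andb (R : pzSemiRingType) (b c : bool) : ((b && c)%:R : R) = b%:R * c%:R.
Proof. by rewrite -mulnb natrM. Qed.

Section Splitting.
Variables (Sig A1 A2 : Type) (B1 : fla Sig A1) (B2 : fla Sig A2) (R : comPzSemiRingType).
Notation B := (sum_fla B1 B2).

(* A pending term of the disjoint sum: under [Either P] its root is read in A1 under [P] or in
   A2 under R^{A2}; under [Right P] it hangs below a letter of A2, so it is read entirely in A2,
   its root under [P]. *)
Inductive slot := Either of pred A1 | Right of pred A2.

Definition slot_pred (e : slot) : pred (A1 + A2) :=
  match e with
  | Either P => fun x => match x with inl a => P a | inr b => rootP B2 b end
  | Right P => fun x => if x is inr b then P b else false
  end.

Definition to_sum (e : slot * term Sig) := (slot_pred e.1, e.2).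

Definition either_children (a : A1) (ch : seq (term Sig)) :=
  tag_children (fun k => Either (arrP B1 k a)) 1 ch.
Definition right_children (b : A2) (ch : seq (term Sig)) :=
  tag_children (fun k => Right (arrP B2 k b)) 1 ch.

(* The local fixpoint of [decomps] running over the children, made global. *)
Fixpoint decomps_children (ch : seq (term Sig)) : seq (seq (term Sig) * seq (term Sig)) :=
  if ch is c :: ch' then
    [seq (p.1 :: q.1, p.2 ++ q.2) | p <- decomps c, q <- decomps_children ch']
  else [:: ([::], [::])].

Definition slot_splits (e : slot * term Sig)
  : seq (seq (pred A1 * term Sig) * seq (pred A2 * term Sig)) :=
  match e.1 with
  | Either P => [seq ([:: (P, d.1)], [seq (rootP B2, x) | x <- d.2]) | d <- decomps e.2]
  | Right P => [:: ([::], [:: (P, e.2)])]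
  end.

(* [splits] extends [coprod] from forests to lists of pending terms. *)
Fixpoint splits (L : seq (slot * term Sig)) :=
  if L is e :: L' then [seq (x.1 ++ y.1, x.2 ++ y.2) | x <- slot_splits e, y <- splits L']
  else [:: ([::], [::])].

Definition theta_count L u v : R := \sum_(w <- shuffle u v) (compat B w (map to_sum L))%:R.

Definition split_count L u v : R :=
  \sum_(GH <- splits L) (compat B1 u GH.1)%:R * (compat B2 v GH.2)%:R.

Lemma big_splits_cat (F : _ -> R) L1 L2 :
  \sum_(GH <- splits (L1 ++ L2)) F GH =
  \sum_(x <- splits L1) \sum_(y <- splits L2) F (x.1 ++ y.1, x.2 ++ y.2).
Proof.
elim: L1 F => [|e L1 IH] F /=; first by rewrite big_seq1; apply: eq_bigr => -[].
rewrite !big_allpairs_dep; apply: eq_bigr => x _.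
by rewrite IH; apply: eq_bigr => y _; apply: eq_bigr => z _; rewrite !catA.
Qed.

Lemma big_splits_either (F : _ -> R) a ch k :
  \sum_(GH <- splits (tag_children (fun j => Either (arrP B1 j a)) k ch)) F GH =
  \sum_(q <- decomps_children ch)
     F (tag_children (fun j => arrP B1 j a) k q.1, [seq (rootP B2, x) | x <- q.2]).
Proof.
elim: ch F k => [|c ch IH] F k /=; first by rewrite !big_seq1.
rewrite !big_allpairs_dep /slot_splits /= big_map; apply: eq_bigr => p _.
by rewrite IH; apply: eq_bigr => q _; rewrite map_cat.
Qed.

Lemma splits_right b ch k :
  splits (tag_children (fun j => Right (arrP B2 j b)) k ch) =
  [:: ([::], tag_children (fun j => arrP B2 j b) k ch)].
Proof. by elim: ch k => //= c ch IH k; rewrite IH. Qed.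

Lemma splits_Either_Node P s ch L : splits ((Either P, Node s ch) :: L) =
  [seq ((P, Leaf) :: y.1, (rootP B2, Node s ch) :: y.2) | y <- splits L] ++
  [seq (x.1 ++ y.1, x.2 ++ y.2)
    | x <- [seq ([:: (P, Node s q.1)], [seq (rootP B2, x) | x <- q.2])
             | q <- decomps_children ch], y <- splits L].
Proof.
rewrite /= -/(decomps_children ch); congr (_ ++ flatten _).
by rewrite -!map_comp.
Qed.

Lemma splits_Right_Node P s ch L : splits ((Right P, Node s ch) :: L) =
  [seq (y.1, (P, Node s ch) :: y.2) | y <- splits L].
Proof. by rewrite /= cats0. Qed.

Lemma theta_count_Leaf e L u v : theta_count ((e, Leaf) :: L) u v = theta_count L u v.
Proof. by apply: eq_bigr => w _; rewrite /= compat_Leaf. Qed.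

Lemma split_count_Leaf e L u v : split_count ((e, Leaf) :: L) u v = split_count L u v.
Proof.
rewrite /split_count /= big_allpairs_dep.
by case: e => P; rewrite /slot_splits /= big_seq1; apply: eq_bigr => y _; rewrite ?compat_Leaf.
Qed.

Lemma theta_count_nil u v : theta_count [::] u v = (nilp u && nilp v)%:R.
Proof.
rewrite /theta_count big_shuffle.
by case: u => [|a u]; case: v => [|b v]; rewrite ?big1 ?addr0 ?add0r // => w _; rewrite compat_nil.
Qed.

Lemma split_count_nil u v : split_count [::] u v = (nilp u && nilp v)%:R.
Proof. by rewrite /split_count big_seq1 /= !compat_nil natr_andb. Qed.

Lemma theta_count_Node e s ch L u v : theta_count ((e, Node s ch) :: L) u v =
  (if u is a :: u' then
     (slot_pred e (inl a) && decP B1 s a)%:R * theta_count (either_children a ch ++ L) u' v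
   else 0) +
  (if v is b :: v' then
     (slot_pred e (inr b) && decP B2 s b)%:R * theta_count (right_children b ch ++ L) u v'
   else 0).
Proof.
have read_left a u' v0 : \sum_(w <- shuffle u' v0)
      (compat B (inl a :: w) ((slot_pred e, Node s ch) :: map to_sum L))%:R =
    (slot_pred e (inl a) && decP B1 s a)%:R *
      \sum_(w <- shuffle u' v0) (compat B w (map to_sum (either_children a ch ++ L)))%:R.
  rewrite mulr_sumr; apply: eq_bigr => w _.
  by rewrite compat_Node map_cat map_tag_children andbA natr_andb.
have read_right b u0 v' : \sum_(w <- shuffle u0 v')
      (compat B (inr b :: w) ((slot_pred e, Node s ch) :: map to_sum L))%:R =
    (slot_pred e (inr b) && decP B2 s b)%:R *
      \sum_(w <- shuffle u0 v') (compat B w (map to_sum (right_children b ch ++ L)))%:R.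
  rewrite mulr_sumr; apply: eq_bigr => w _.
  by rewrite compat_Node map_cat map_tag_children andbA natr_andb.
rewrite /theta_count big_shuffle /=.
by case: u => [|a u]; case: v => [|b v]; rewrite ?read_left ?read_right ?add0r ?addr0.
Qed.

Lemma big_compat_Node_r (X : Type) (r : seq X) (L1 : X -> seq (pred A1 * term Sig))
    (L2 : X -> seq (pred A2 * term Sig)) Q s ch u v :
  \sum_(x <- r) ((compat B1 u (L1 x))%:R * (compat B2 v ((Q, Node s ch) :: L2 x))%:R : R) =
  if v is b :: v' then
    (Q b && decP B2 s b)%:R *
      \sum_(x <- r) (compat B1 u (L1 x))%:R * (compat B2 v' (children B2 b ch ++ L2 x))%:R
  else 0.
Proof.
case: v => [|b v]; first by rewrite big1 // => x _; rewrite compat_Node0 mulr0.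
rewrite mulr_sumr; apply: eq_bigr => x _.
by rewrite compat_Node andbA natr_andb mulrCA.
Qed.

Lemma big_compat_Node_l (X Y : Type) (r1 : seq X) (r2 : seq Y) (F : X -> seq (term Sig))
    (L1 : Y -> seq (pred A1 * term Sig)) (L2 : X -> Y -> seq (pred A2 * term Sig)) P s u v :
  \sum_(x <- r1) \sum_(y <- r2)
     ((compat B1 u ((P, Node s (F x)) :: L1 y))%:R * (compat B2 v (L2 x y))%:R : R) =
  if u is a :: u' then
    (P a && decP B1 s a)%:R * \sum_(x <- r1) \sum_(y <- r2)
       (compat B1 u' (children B1 a (F x) ++ L1 y))%:R * (compat B2 v (L2 x y))%:R
  else 0.
Proof.
case: u => [|a u].
  by rewrite big1 // => x _; rewrite big1 // => y _; rewrite compat_Node0 mul0r.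
rewrite mulr_sumr; apply: eq_bigr => x _; rewrite mulr_sumr; apply: eq_bigr => y _.
by rewrite compat_Node andbA natr_andb mulrA.
Qed.

Lemma split_count_Node e s ch L u v : split_count ((e, Node s ch) :: L) u v =
  (if u is a :: u' then
     (slot_pred e (inl a) && decP B1 s a)%:R * split_count (either_children a ch ++ L) u' v
   else 0) +
  (if v is b :: v' then
     (slot_pred e (inr b) && decP B2 s b)%:R * split_count (right_children b ch ++ L) u v'
   else 0).
Proof.
have split_right b u0 v0 : split_count (right_children b ch ++ L) u0 v0 =
    \sum_(y <- splits L) (compat B1 u0 y.1)%:R * (compat B2 v0 (children B2 b ch ++ y.2))%:R.
  by rewrite /split_count big_splits_cat splits_right big_seq1.
have split_left a u0 v0 : split_count (either_children a ch ++ L) u0 v0 =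
    \sum_(q <- decomps_children ch) \sum_(y <- splits L)
      (compat B1 u0 (children B1 a q.1 ++ y.1))%:R *
      (compat B2 v0 ([seq (rootP B2, x) | x <- q.2] ++ y.2))%:R.
  by rewrite /split_count big_splits_cat big_splits_either.
case: e => P.
- rewrite [LHS]/split_count splits_Either_Node big_cat big_map big_allpairs_dep big_map /=.
  under eq_bigr => y _ do rewrite compat_Leaf.
  rewrite big_compat_Node_l big_compat_Node_r addrC.
  by case: u => [|a u]; case: v => [|b v]; rewrite ?split_left ?split_right ?mul0r.
- rewrite [LHS]/split_count splits_Right_Node big_map /= big_compat_Node_r.
  by case: u => [|a u]; case: v => [|b v]; rewrite ?split_right ?mul0r ?add0r.
Qed.

Lemma theta_count_split L u v : theta_count L u v = split_count L u v.
Proof.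
have [n] := ubnP (size u + size v); elim: n L u v => // n IHn L u v uv_lt.
elim: L => [|[e [|s ch]] L IHL]; first by rewrite theta_count_nil split_count_nil.
  by rewrite theta_count_Leaf split_count_Leaf.
rewrite theta_count_Node split_count_Node {IHL}.
by case: u uv_lt => [|a u] uv_lt; case: v uv_lt => [|b v] /= uv_lt; rewrite ?IHn //=; lia.
Qed.

Lemma big_coprod_splits (F : seq (pred A1 * term Sig) -> seq (pred A2 * term Sig) -> R) f :
  \sum_(gh <- coprod f) F [seq (rootP B1, t) | t <- gh.1] [seq (rootP B2, t) | t <- gh.2] =
  \sum_(GH <- splits [seq (Either (rootP B1), t) | t <- f])
     F [seq e <- GH.1 | is_node e.2] [seq e <- GH.2 | is_node e.2].
Proof.
elim: f F => [|t f IH] F /=; first by rewrite !big_seq1.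
rewrite !big_allpairs_dep /slot_splits /= big_map; apply: eq_bigr => d _.
under eq_bigr => q _ do rewrite !map_cat.
rewrite (IH (fun g h => F ([seq (rootP B1, t) | t <- rd [:: d.1]] ++ g)
                          ([seq (rootP B2, t) | t <- rd d.2] ++ h))).
apply: eq_bigr => y _; rewrite !filter_cat filter_map.
by case: d.1.
Qed.

Lemma theta_count_forest f u v :
  \sum_(w <- shuffle u v) ((compatible B f w)%:R : R) =
  theta_count [seq (Either (rootP B1), t) | t <- f] u v.
Proof. by apply: eq_bigr => w _; rewrite compatible_compat -map_comp. Qed.

Lemma split_count_forest f u v :
  \sum_(gh <- coprod f) ((compatible B1 gh.1 u)%:R * (compatible B2 gh.2 v)%:R : R) =
  split_count [seq (Either (rootP B1), t) | t <- f] u v.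
Proof.
under eq_bigr => gh _ do rewrite !compatible_compat.
rewrite (big_coprod_splits (fun g h => (compat B1 u g)%:R * (compat B2 v h)%:R)).
by apply: eq_bigr => GH _; rewrite !compat_filter.
Qed.
End Splitting.

Theorem proposition4p4 (K : fieldType) (hK : [pchar K] =i pred0)
  (Sig : Type) (ar : Sig -> nat) (A1 A2 : Type)
  (B1 : fla Sig A1) (B2 : fla Sig A2) (f : forest Sig)
  (hf : reduced_forest ar f) :
  theta (r_alpha K (sum_fla B1 B2) f) = tensor_r K B1 B2 (coprod f).
Proof.
apply: functional_extensionality => -[u v].
by rewrite /theta /tensor_r /r_alpha /= theta_count_forest split_count_forest theta_count_split.
Qed.
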